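(* Let $p$ be an odd prime and let $J$ be a finite family of lattice points in $\mathbb{Z}^2$ (repetitions allowed) with $|J|=3p-2$ or $|J|=3p-1$. If $(p,J)=0$, then $(2p,J)\equiv -1 \pmod p$.
   Context: For a finite family $X$ of lattice points in $\mathbb{Z}^2$ (points may repeat; subsets are subfamilies, i.e. subsets of the index set) and an integer $n\ge 0$, $(n,X)$ denotes the number of $n$-element subfamilies of $X$ whose coordinatewise sum is congruent to $(0,0)$ modulo $p$. *)

From mathcomp Require Import all_boot all_order all_algebra.
Set Implicit Arguments. Unset Strict Implicit. Unset Printing Implicit Defensive.
Import GRing.Theory Num.Theory.
Local Open Scope ring_scope.

(* A finite family of lattice points in Z^2, indexed by 'I_m (repetitions
   allowed).  [zs_count p n J] = (n, J): the number of n-element subfamilies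
   (subsets of the index set) whose coordinatewise sum is = (0,0) mod p. *)
Definition zs_count (p n m : nat) (J : 'I_m -> int * int) : nat :=
  #|[set S : {set 'I_m} | (#|S| == n)%N
      && (p%:Z %| \sum_(i in S) (J i).1)%Z
      && (p%:Z %| \sum_(i in S) (J i).2)%Z]|.

From mathcomp Require Import all_boot all_order all_algebra all_field.
From mathcomp Require Import zify ring.

(** A Chevalley–Warning argument.  Over a finite field with q elements,
    [1 - x ^+ (q - 1)] is the indicator of [x = 0], so the indicator that
    |S| and both coordinate sums of S vanish mod p is a polynomial of degree
    3(p - 1) < m in these three sums.  The signed sum [\sum_S (-1)^|S| ...]
    over all subsets of 'I_m kills every such polynomial of degree below m:
    each monomial of its expansion misses some index, and toggling that index
    cancels it.  Since |S| < 3p and p is odd, the same signed sum equals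
    1 - (p,J) + (2p,J) mod p, so (p,J) = 0 forces (2p,J) = -1 mod p. *)

Set Implicit Arguments. Unset Strict Implicit. Unset Printing Implicit Defensive.
Import GRing.Theory.
Local Open Scope ring_scope.

Section SignedSubsetSums.

Variable m : nat.
Implicit Types (S T : {set 'I_m}).

Lemma sum_sign_supsets (R : pzRingType) T i : i \notin T ->
  \sum_(S : {set 'I_m}) (-1) ^+ #|S| * (T \subset S)%:R = 0 :> R.
Proof.
move=> iNT.
suff sum_int0 : \sum_(S : {set 'I_m}) (-1) ^+ #|S| * (T \subset S)%:R = 0 :> int.
  have cast S : (-1) ^+ #|S| * (T \subset S)%:R =
      ((-1) ^+ #|S| * (T \subset S)%:R : int)%:~R :> R.
    by rewrite rmorphM rmorphXn rmorphN1 rmorph_nat.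
  by rewrite (eq_bigr _ (fun S _ => cast S)) -rmorph_sum sum_int0.
pose toggle S := if i \in S then S :\ i else i |: S.
have toggleK : involutive toggle.
  move=> S; rewrite /toggle; case: (boolP (i \in S)) => iS.
    by rewrite setD11 setD1K.
  by rewrite setU11 setU1K.
have sub_toggle S : (T \subset toggle S) = (T \subset S).
  rewrite /toggle; case: ifP => iS; first by rewrite subsetD1 iNT andbT.
  apply/subsetP/subsetP => sTS x xT; last by rewrite inE sTS ?orbT.
  by case/setU1P: (sTS x xT) => // xi; rewrite -xi xT in iNT.
have sign_toggle S : (-1) ^+ #|toggle S| = - (-1) ^+ #|S| :> int.
  rewrite /toggle; case: ifP => iS.
    by rewrite [in RHS](cardsD1 i S) iS exprS mulN1r opprK.
  by rewrite cardsU1 iS exprS mulN1r.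
set s := \sum_(S : {set 'I_m}) _; have : s = - s.
  rewrite {1}/s (reindex_inj (inv_inj toggleK)) /= -sumrN.
  by apply: eq_bigr => S _; rewrite sub_toggle sign_toggle mulNr.
lia.
Qed.

(* Expanding the product, the term of [f : 'I_k -> 'I_m] only involves the
   subsets containing the image of [f], which misses some index as [k < m]. *)
Lemma sum_sign_prod_sums (R : comPzRingType) k (c : 'I_k -> 'I_m -> R) :
  (k < m)%N ->
  \sum_(S : {set 'I_m}) (-1) ^+ #|S| * \prod_(j < k) \sum_(i in S) c j i = 0.
Proof.
move=> ltkm.
have expand S : \prod_(j < k) \sum_(i in S) c j i =
    \sum_(f : {ffun 'I_k -> 'I_m})
      ([set f j | j in 'I_k] \subset S)%:R * \prod_(j < k) c j (f j).
  under eq_bigr => j _ do rewrite big_mkcond /=.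
  rewrite bigA_distr_bigA /=; apply: eq_bigr => f _.
  have [sfS | /subsetPn[_ /imsetP[j _ ->] fjNS]] := boolP (_ \subset S).
    by rewrite mul1r; apply: eq_bigr => j _; rewrite (subsetP sfS) ?imset_f.
  by rewrite mul0r (bigD1 j) //= (negbTE fjNS) mul0r.
under eq_bigr => S _ do rewrite expand big_distrr /=.
rewrite exchange_big /=; apply: big1 => f _.
under eq_bigr => S _ do rewrite mulrA.
rewrite -big_distrl /=.
have [i iNf] : exists i, i \notin [set f j | j in 'I_k].
  apply/existsP; apply: contraTT ltkm => /existsPn fT.
  rewrite -leqNgt -[m]card_ord -[k]card_ord; apply: leq_trans (leq_imset_card f _).
  by apply/subset_leq_card/subsetP => x _; have := fT x; rewrite negbK.
by rewrite (sum_sign_supsets _ iNf) mul0r.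
Qed.

Lemma sum_sign_monomial (R : comPzRingType) (a b d : nat) (u v w : 'I_m -> R) :
  (a + b + d < m)%N ->
  \sum_(S : {set 'I_m}) (-1) ^+ #|S| * ((\sum_(i in S) u i) ^+ a *
    (\sum_(i in S) v i) ^+ b * (\sum_(i in S) w i) ^+ d) = 0.
Proof.
move=> ltm; rewrite -[RHS](sum_sign_prod_sums (fun j : 'I_(a + b + d) =>
  if (j < a)%N then u else if (j < a + b)%N then v else w) ltm).
apply: eq_bigr => S _; congr (_ * _).
rewrite !big_split_ord /=; congr (_ * _ * _).
- rewrite -[in LHS](card_ord a) -prodr_const.
  by apply: eq_bigr => j _; rewrite /= ltn_ord.
- rewrite -[in LHS](card_ord b) -prodr_const.
  by apply: eq_bigr => j _; have ltjb := ltn_ord j; rewrite /= ifF ?ifT //; lia.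
- rewrite -[in LHS](card_ord d) -prodr_const.
  by apply: eq_bigr => j _; rewrite /= ifF ?ifF //; lia.
Qed.

End SignedSubsetSums.

Lemma finField_zero_indicator (F : finFieldType) (x : F) :
  1 - x ^+ #|F|.-1 = (x == 0)%:R.
Proof.
have gt1F := finNzRing_gt1 F.
have [->|x_neq0] := eqVneq x 0.
  by rewrite expr0n -subn1 subn_eq0 leqNgt gt1F subr0.
suff -> : x ^+ #|F|.-1 = 1 by rewrite subrr.
by apply: (mulIf x_neq0); rewrite mul1r -exprSr prednK ?expf_card // ltnW.
Qed.

Lemma sum_sign_zero_sums (F : finFieldType) m (u v w : 'I_m -> F) :
  (3 * #|F|.-1 < m)%N ->
  \sum_(S : {set 'I_m}) (-1) ^+ #|S| * [&& \sum_(i in S) u i == 0,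
     \sum_(i in S) v i == 0 & \sum_(i in S) w i == 0]%:R = 0 :> F.
Proof.
set q := #|F|.-1 => lt3qm.
pose t a b d := \sum_(S : {set 'I_m}) (-1) ^+ #|S| * ((\sum_(i in S) u i) ^+ a *
    (\sum_(i in S) v i) ^+ b * (\sum_(i in S) w i) ^+ d).
have t0 a b d : (a <= q)%N -> (b <= q)%N -> (d <= q)%N -> t a b d = 0.
  by move=> aq bq dq; apply: sum_sign_monomial; lia.
transitivity
  (t 0 0 0 - t q 0 0 - t 0 q 0 - t 0 0 q + t q q 0 + t q 0 q + t 0 q q - t q q q).
  rewrite /t -!(sumrB, big_split) /=; apply: eq_bigr => S _.
  by rewrite -!mulnb !natrM -!finField_zero_indicator !expr0; ring.
by rewrite !t0 ?leq0n // !(subr0, addr0).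
Qed.

Lemma signr_dvdn_lt3 (R : pzRingType) (p n : nat) :
  prime p -> odd p -> (n < 3 * p)%N ->
  (-1) ^+ n * (p %| n)%:R
    = (n == 0)%N%:R - (n == p)%N%:R + (n == 2 * p)%N%:R :> R.
Proof.
move=> p_pr p_odd ltn3p; have p_gt0 := prime_gt0 p_pr.
have [/dvdnP[q n_eq] | pNn] := boolP (p %| n)%N; last first.
  have [n_neq0 n_neqp n_neq2p] : [/\ n != 0, n != p & n != 2 * p]%N.
    by split; apply: contraNneq pNn => ->; rewrite ?dvdn0 ?dvdnn ?dvdn_mull.
  by rewrite (negbTE n_neq0) (negbTE n_neqp) (negbTE n_neq2p) mulr0 subrr addr0.
subst n; have : (q < 3)%N by rewrite -(ltn_pmul2r p_gt0).
rewrite mulr1n mulr1 -signr_odd oddM p_odd andbT.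
case: q {ltn3p} => [|[|[|//]]] _.
- have [-> ->] : (0 * p == p)%N = false /\ (0 * p == 2 * p)%N = false by lia.
  by rewrite mul0n eqxx subr0 addr0.
- have [-> ->] : (1 * p == 0)%N = false /\ (1 * p == 2 * p)%N = false by lia.
  by rewrite mul1n eqxx sub0r addr0.
- have [-> ->] : (2 * p == 0)%N = false /\ (2 * p == p)%N = false by lia.
  by rewrite eqxx subr0 add0r.
Qed.

Section ZeroSumCount.

Variables (p m : nat) (J : 'I_m -> int * int).
Hypothesis p_pr : prime p.

Definition zero_sum_set (n : nat) (S : {set 'I_m}) : bool :=
  [&& #|S| == n, (p%:Z %| \sum_(i in S) (J i).1)%Z
               & (p%:Z %| \sum_(i in S) (J i).2)%Z].

Lemma zs_countE n :
  ((zs_count p n J)%:R : 'F_p) = \sum_(S : {set 'I_m}) (zero_sum_set n S)%:R.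
Proof.
rewrite /zs_count -sum1_card natr_sum big_mkcond /=.
by apply: eq_bigr => S _; rewrite inE /zero_sum_set andbA; case: ifP.
Qed.

Lemma zs_count0 : ((zs_count p 0 J)%:R : 'F_p) = 1.
Proof.
rewrite zs_countE (bigD1 set0) //= big1 => [|S SN0].
  by rewrite /zero_sum_set cards0 !big_set0 !dvdz0 addr0.
by rewrite /zero_sum_set cards_eq0 (negbTE SN0).
Qed.

Lemma zs_count_relation : odd p -> (3 * p.-1 < m < 3 * p)%N ->
  1 - (zs_count p p J)%:R + (zs_count p (2 * p)%N J)%:R = 0 :> 'F_p.
Proof.
move=> p_odd /andP[lt3pm ltm3p]; have charFp := pchar_Fp p_pr.
pose coord k (i : 'I_m) : 'F_p := (if k then (J i).1 else (J i).2)%:~R.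
have dvd_coord k (S : {set 'I_m}) : (\sum_(i in S) coord k i == 0) =
    (p%:Z %| \sum_(i in S) (if k then (J i).1 else (J i).2))%Z.
  by rewrite (dvdz_pcharf charFp) rmorph_sum.
have := sum_sign_zero_sums (fun=> 1) (coord true) (coord false).
rewrite card_Fp // => /(_ lt3pm) <-.
rewrite -{1}zs_count0 !zs_countE -sumrB -big_split /=; apply: eq_bigr => S _.
rewrite sumr_const -(dvdn_pcharf charFp) !dvd_coord /zero_sum_set.
have ltS3p : (#|S| < 3 * p)%N.
  by apply: leq_ltn_trans ltm3p; have := max_card S; rewrite card_ord.
case: (p%:Z %| _)%Z; case: (p%:Z %| _)%Z; rewrite ?andbT ?andbF.
- by rewrite signr_dvdn_lt3.
all: by rewrite !mulr0n mulr0 subr0 addr0.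
Qed.

End ZeroSumCount.

Theorem corollary3 (p m : nat) (J : 'I_m -> int * int) :
  prime p -> odd p -> (m = 3 * p - 2 \/ m = 3 * p - 1)%N ->
  zs_count p p J = 0%N ->
  ((zs_count p (2 * p) J)%:Z = - 1 %[mod p%:Z])%Z.
Proof.
move=> p_pr p_odd m_eq zs_p0.
have p_gt1 := prime_gt1 p_pr.
have m_bounds : (3 * p.-1 < m < 3 * p)%N by case: m_eq => ->; lia.
have /eqP := zs_count_relation J p_pr p_odd m_bounds.
rewrite zs_p0 subr0 addrC addr_eq0 => /eqP zs_2p.
apply/eqP; rewrite eqz_mod_dvd (dvdz_pcharf (pchar_Fp p_pr)).
by rewrite rmorphB rmorphN1 /= -pmulrn zs_2p subrr eqxx.
Qed.
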